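(* Let $M$ be a smooth $n$-manifold with a torsion-free linear connection $\nabla$ and a symmetric $(0,2)$-tensor field $c$, and let $\overline\nabla$ be the Levi-Civita connection of the modified Riemannian extension $\overline g_{\nabla,c}$ on $T^{\ast}M$. Then the Schouten–Van Kampen connection $\overline\nabla^{\ast}$ associated to $\overline\nabla$ and adapted to the pair of distributions $(\mathcal H,\mathcal V)$ coincides with the horizontal lift ${}^H\nabla$ of $\nabla$ to $T^{\ast}M$.
   Context: Summation convention; $\overline{i}=n+i$. $\Gamma^h_{ij}$ are the coefficients of $\nabla$ in local coordinates $(x^i)$. On $T^{\ast}M$ use induced coordinates $(x^i,p_i)$, $\partial_{\overline i}=\partial/\partial p_i$, and the adapted frame $E_j=\partial_j+p_a\Gamma^a_{hj}\partial_{\overline h}$, $E_{\overline j}=\partial_{\overline j}$. The horizontal distribution $\mathcal H$ is spanned by the $E_j$ and the vertical distribution $\mathcal V$ by the $E_{\overline j}$; $H$ and $V$ denote the projections of $TT^{\ast}M=\mathcal H\oplus\mathcal V$ onto $\mathcal H$ and $\mathcal V$. The modified Riemannian extension is $\overline{g}_{\nabla,c}(E_i,E_j)=c_{ij}$, $\overline{g}_{\nabla,c}(E_i,E_{\overline j})=\overline{g}_{\nabla,c}(E_{\overline j},E_i)=\delta_i^j$, $\overline{g}_{\nabla,c}(E_{\overline i},E_{\overline j})=0$. The Schouten–Van Kampen connection is $\overline\nabla^{\ast}_XY=H(\overline\nabla_X HY)+V(\overline\nabla_X VY)$. The horizontal lift ${}^H\nabla$ is the linear connection on $T^{\ast}M$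 with ${}^H\nabla_{E_{\overline{i}}}E_{\overline{j}}=0$, ${}^H\nabla_{E_{\overline{i}}}E_{j}=0$, ${}^H\nabla_{E_{i}}E_{\overline{j}}=-\Gamma^{j}_{ih}E_{\overline{h}}$, ${}^H\nabla_{E_{i}}E_{j}=\Gamma^{h}_{ij}E_{h}$. *)

From HB Require Import structures.
From mathcomp Require Import all_boot all_order all_algebra.
From mathcomp Require Import all_classical all_reals all_analysis.
Set Implicit Arguments. Unset Strict Implicit. Unset Printing Implicit Defensive.
Import Order.TTheory GRing.Theory Num.Theory.
Import numFieldNormedType.Exports.
Local Open Scope classical_set_scope.
Local Open Scope ring_scope.

Section CotangentChart.
Variables (R : realType) (n : nat).

(* A point of the chart T*U of T*M has coordinates (x^1..x^n, p_1..p_n),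
   stored as a row vector z of size n+n: z_i = x^i, z_(n+i) = p_i. *)
Definition pt := 'rV[R]_(n + n).
Definition hor (i : 'I_n) : 'I_(n + n) := lshift n i.
Definition ver (i : 'I_n) : 'I_(n + n) := rshift n i.
Definition xpart (z : pt) : 'rV[R]_n := \row_i z ord0 (hor i).
Definition ppart (z : pt) : 'rV[R]_n := \row_i z ord0 (ver i).

Definition iterD {m : nat} (vs : seq 'rV[R]_m) (f : 'rV[R]_m -> R) : 'rV[R]_m -> R :=
  foldr (fun v g => fun z => 'D_v g z) f vs.
Definition smooth_on {m : nat} (W : set 'rV[R]_m) (f : 'rV[R]_m -> R) : Prop :=
  forall (vs : seq 'rV[R]_m) (z : 'rV[R]_m), W z -> differentiable (iterD vs f) z.

Definition cvec (A : 'I_(n + n)) : pt := delta_mx 0 A.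
Definition pd (A : 'I_(n + n)) (f : pt -> R) (z : pt) : R := 'D_(cvec A) f z.

(* A vector field on the chart: its components in the coordinate frame d_A. *)
Definition vfield := pt -> pt.

(* Data of the base: Christoffel symbols Gam h i j = Gamma^h_{ij}, and c i j = c_{ij}. *)
Variables (Gam : 'I_n -> 'I_n -> 'I_n -> 'rV[R]_n -> R) (c : 'I_n -> 'I_n -> 'rV[R]_n -> R).

(* Adapted frame: E_j = d_j + p_a Gamma^a_{hj} d_{n+h},  E_{n+j} = d_{n+j}.
   Row A of Fm z is the coordinate expression of E_A at z. *)
Definition Eframe (A : 'I_(n + n)) (z : pt) : pt :=
  match fintype.split A with
  | inl j => cvec (hor j) +
             \sum_(h < n) (\sum_(a < n) ppart z ord0 a * Gam a h j (xpart z)) *: cvec (ver h)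
  | inr j => cvec (ver j)
  end.
Definition Fm (z : pt) : 'M[R]_(n + n) := \matrix_(A, B) Eframe A z ord0 B.

(* Components of a vector u at z with respect to the adapted frame: u = sum_A fco z u A E_A. *)
Definition fco (z : pt) (u : pt) : pt := u *m invmx (Fm z).

Definition Hproj (z : pt) (u : pt) : pt :=
  \sum_(j < n) fco z u ord0 (hor j) *: Eframe (hor j) z.
Definition Vproj (z : pt) (u : pt) : pt :=
  \sum_(j < n) fco z u ord0 (ver j) *: Eframe (ver j) z.

(* Modified Riemannian extension, given by its values on the adapted frame:
   g(E_i,E_j) = c_ij, g(E_i,E_{n+j}) = g(E_{n+j},E_i) = delta_ij, g(E_{n+i},E_{n+j}) = 0. *)
Definition Gframe (z : pt) : 'M[R]_(n + n) :=
  \matrix_(A, B)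
    match fintype.split A, fintype.split B with
    | inl i, inl j => c i j (xpart z)
    | inl i, inr j => (i == j)%:R
    | inr i, inl j => (i == j)%:R
    | inr i, inr j => 0
    end.
Definition gmat (z : pt) : 'M[R]_(n + n) :=
  invmx (Fm z) *m Gframe z *m (invmx (Fm z))^T.

Definition LCGam (z : pt) (C A B : 'I_(n + n)) : R :=
  2^-1 * \sum_(D < n + n) invmx (gmat z) C D *
    (pd A (fun w => gmat w B D) z + pd B (fun w => gmat w A D) z
     - pd D (fun w => gmat w A B) z).

Definition LC (X Y : vfield) : vfield := fun z =>
  'D_(X z) Y z + \row_C (\sum_(A < n + n) \sum_(B < n + n) LCGam z C A B * X z ord0 A * Y z ord0 B).

Definition SVK (X Y : vfield) : vfield := fun z =>
  Hproj z (LC X (fun w => Hproj w (Y w)) z) + Vproj z (LC X (fun w => Vproj w (Y w)) z).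

Definition HLframe (A B : 'I_(n + n)) (z : pt) : pt :=
  match fintype.split A, fintype.split B with
  | inl i, inl j => \sum_(h < n) Gam h i j (xpart z) *: Eframe (hor h) z
  | inl i, inr j => - \sum_(h < n) Gam j i h (xpart z) *: Eframe (ver h) z
  | inr _, _ => 0
  end.
Definition HL (X Y : vfield) : vfield := fun z =>
  \sum_(B < n + n) 'D_(X z) (fun w => fco w (Y w) ord0 B) z *: Eframe B z
  + \sum_(A < n + n) \sum_(B < n + n)
      (fco z (X z) ord0 A * fco z (Y z) ord0 B) *: HLframe A B z.

End CotangentChart.

(* In the adapted frame the metric is [[c, 1], [1, 0]], so in coordinates (x, p) it is
   gbar = [[c - N - N^T, 1], [1, 0]] with N_{jh} = p_a Gamma^a_{hj}: only the horizontal block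
   depends on p, and linearly.  Consequently the Christoffel symbols of gbar that survive the
   projections H and V are the p-derivatives -1/2 d_{p_k} gbar_{ij} = Gamma^k_{ij} and
   1/2 d_{p_j} gbar_{ih} = -Gamma^j_{ih} (both by torsion-freeness), which are exactly the
   coefficients defining the horizontal lift.  None of these symbols involves c, so no
   hypothesis on c is needed. *)

From HB Require Import structures.
From mathcomp Require Import all_boot all_order all_algebra.
From mathcomp Require Import all_classical all_reals all_analysis.
From mathcomp Require Import ring.
Set Implicit Arguments. Unset Strict Implicit. Unset Printing Implicit Defensive.
Import Order.TTheory GRing.Theory Num.Theory.
Import numFieldNormedType.Exports.
Local Open Scope classical_set_scope.
Local Open Scope ring_scope.

Lemma split_hor n (i : 'I_n) : fintype.split (hor i) = inl i.
Proof. exact: (unsplitK (inl i)). Qed.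

Lemma split_ver n (i : 'I_n) : fintype.split (ver i) = inr i.
Proof. exact: (unsplitK (inr i)). Qed.

Lemma hor_ver_ind n (P : 'I_(n + n) -> Prop) :
  (forall i, P (hor i)) -> (forall i, P (ver i)) -> forall A, P A.
Proof.
move=> Ph Pv A; rewrite -(splitK A).
by case: (fintype.split A) => i; [exact: Ph | exact: Pv].
Qed.

Lemma sum_hor_ver (V : nmodType) n (F : 'I_(n + n) -> V) :
  \sum_(A < n + n) F A = \sum_(i < n) F (hor i) + \sum_(i < n) F (ver i).
Proof. exact: big_split_ord. Qed.

Lemma sum_delta_l (R : pzSemiRingType) n (F : 'I_n -> R) k :
  \sum_(j < n) F j * (j == k)%:R = F k.
Proof.
by rewrite (bigD1 k) //= eqxx mulr1 big1 ?addr0 // => j /negbTE ->; rewrite mulr0.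
Qed.

Lemma sum_delta_r (R : pzSemiRingType) n (F : 'I_n -> R) k :
  \sum_(j < n) (k == j)%:R * F j = F k.
Proof.
rewrite (bigD1 k) //= eqxx mul1r big1 ?addr0 // => j.
by rewrite eq_sym => /negbTE ->; rewrite mul0r.
Qed.

Lemma sum_trilinear_swap (R : comPzRingType) n (G : 'I_n -> 'I_n -> 'I_n -> R)
    (x y u : 'I_n -> R) :
  \sum_(j < n) (\sum_(i < n) \sum_(l < n) G j i l * x i * y l) * u j =
  \sum_(i < n) \sum_(l < n) x i * y l * \sum_(j < n) G j i l * u j.
Proof.
under eq_bigr do rewrite mulr_suml; rewrite exchange_big /=; apply: eq_bigr => i _.
under eq_bigr do rewrite mulr_suml; rewrite exchange_big /=; apply: eq_bigr => l _.
by rewrite mulr_sumr; apply: eq_bigr => j _; ring.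
Qed.

Lemma invmx_right (R : comUnitRingType) n (A B : 'M[R]_n) :
  A *m B = 1%:M -> invmx A = B.
Proof.
by move=> AB; have [Au _] := mulmx1_unit AB; rewrite -(mulKmx Au B) AB mulmx1.
Qed.

Lemma derive_along_affine (R : numFieldType) (V W : normedModType R) (f : V -> W) z v d :
  (forall h : R, f (h *: v + z) = f z + h *: d) -> derivable f z v /\ 'D_v f z = d.
Proof.
move=> fA.
have fd : (fun h : R => h^-1 *: ((f \o shift z) (h *: v) - f z)) @ 0^' --> d.
  apply: cvg_trans (cvg_cst d).
  apply: near_eq_cvg; near=> h.
  have h0 : h != 0 by near: h; exact: nbhs_dnbhs_neq.
  by rewrite /= fA addrC addKr scalerA mulVf ?scale1r.
  exact: Proper_dnbhs_numFieldType.
by split; [exact: (cvgP d fd) | exact: cvg_lim fd].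
Unshelve. all: by end_near. Qed.

Lemma derivable_coord (R : numFieldType) m k (z v : 'M[R]_(m, k)) i j :
  derivable (fun w : 'M[R]_(m, k) => w i j) z v.
Proof. by apply: (proj1 (derive_along_affine (d := v i j) _)) => h; rewrite !mxE addrC. Qed.

Lemma derivable_comp_xpart (R : realType) n (g : 'rV[R]_n -> R) (z v : pt R n) :
  differentiable g (xpart z) -> derivable (fun w => g (xpart w)) z v.
Proof.
move=> dg; have := @diff_derivable _ _ _ g (xpart z) (xpart v) dg; rewrite /derivable.
suff -> : (fun h : R => h^-1 *: (((fun w => g (xpart w)) \o shift z) (h *: v) - g (xpart z))) =
          (fun h : R => h^-1 *: ((g \o shift (xpart z)) (h *: xpart v) - g (xpart z))) by [].
by apply/funext => h /=; congr (_ *: (g _ - _)); apply/rowP => a; rewrite !mxE.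
Qed.

Section AdaptedFrame.
Variables (R : realType) (n : nat).
Variables (Gam : 'I_n -> 'I_n -> 'I_n -> 'rV[R]_n -> R) (c : 'I_n -> 'I_n -> 'rV[R]_n -> R).
Implicit Types (w z u : pt R n).

Definition Evert_mx w : 'M[R]_n :=
  \matrix_(j, h) \sum_(a < n) ppart w ord0 a * Gam a h j (xpart w).
Definition c_mx w : 'M[R]_n := \matrix_(i, j) c i j (xpart w).
Definition gbar_hor_mx w : 'M[R]_n := c_mx w - Evert_mx w - (Evert_mx w)^T.

Lemma cvecE (A B : 'I_(n + n)) : cvec R A ord0 B = (A == B)%:R.
Proof. by rewrite mxE /= eq_sym. Qed.

Lemma Eframe_hor_hor w j k : Eframe Gam (hor j) w ord0 (hor k) = (j == k)%:R.
Proof.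
rewrite /Eframe split_hor mxE cvecE eq_lshift summxE big1 ?addr0 // => h _.
by rewrite mxE cvecE eq_rlshift mulr0.
Qed.

Lemma Eframe_hor_ver w j h : Eframe Gam (hor j) w ord0 (ver h) = Evert_mx w j h.
Proof.
rewrite /Eframe split_hor mxE cvecE eq_lrshift add0r summxE (bigD1 h) //=.
rewrite [s in s + _]mxE cvecE eqxx mulr1 [s in _ + s]big1 ?addr0 ?mxE // => l /negbTE lh.
by rewrite mxE cvecE eq_rshift lh mulr0.
Qed.

Lemma Eframe_ver_hor w j k : Eframe Gam (ver j) w ord0 (hor k) = 0.
Proof. by rewrite /Eframe split_ver cvecE eq_rlshift. Qed.

Lemma Eframe_ver_ver w j h : Eframe Gam (ver j) w ord0 (ver h) = (j == h)%:R.
Proof. by rewrite /Eframe split_ver cvecE eq_rshift. Qed.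

Lemma Fm_block w : Fm Gam w = block_mx 1%:M (Evert_mx w) 0 1%:M.
Proof.
apply/matrixP => A B; rewrite mxE; move: A B.
apply: hor_ver_ind => i; apply: hor_ver_ind => j.
- by rewrite Eframe_hor_hor block_mxEul mxE.
- by rewrite Eframe_hor_ver block_mxEur.
- by rewrite Eframe_ver_hor block_mxEdl mxE.
- by rewrite Eframe_ver_ver block_mxEdr mxE.
Qed.

Lemma invmx_Fm w : invmx (Fm Gam w) = block_mx 1%:M (- Evert_mx w) 0 1%:M.
Proof.
apply: invmx_right; rewrite Fm_block mulmx_block !mul1mx !mulmx1 !mul0mx !mulmx0.
by rewrite addNr !add0r addr0 -scalar_mx_block.
Qed.

Lemma Gframe_block w : Gframe c w = block_mx (c_mx w) 1%:M 1%:M 0.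
Proof.
apply/matrixP => A B; rewrite mxE; move: A B.
by apply: hor_ver_ind => i; apply: hor_ver_ind => j;
  rewrite ?split_hor ?split_ver ?block_mxEul ?block_mxEur ?block_mxEdl ?block_mxEdr !mxE.
Qed.

Lemma gmat_block w : gmat Gam c w = block_mx (gbar_hor_mx w) 1%:M 1%:M 0.
Proof.
rewrite /gmat invmx_Fm Gframe_block tr_block_mx !trmx1 trmx0 linearN /=.
by rewrite !mulmx_block !mul1mx !mulmx1 !mul0mx !mulmx0 !addr0 !add0r mul1mx mul0mx addr0.
Qed.

Lemma invmx_gmat w : invmx (gmat Gam c w) = block_mx 0 1%:M 1%:M (- gbar_hor_mx w).
Proof.
apply: invmx_right; rewrite gmat_block mulmx_block !mul1mx !mulmx1 !mul0mx !mulmx0.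
by rewrite !addr0 !add0r subrr -scalar_mx_block.
Qed.

Lemma fco_hor w u j : fco Gam w u ord0 (hor j) = u ord0 (hor j).
Proof.
rewrite /fco invmx_Fm mxE sum_hor_ver.
under eq_bigr do rewrite block_mxEul mxE.
under [s in _ + s]eq_bigr do rewrite block_mxEdl mxE mulr0.
by rewrite sum_delta_l big1 ?addr0.
Qed.

Lemma fco_ver w u h :
  fco Gam w u ord0 (ver h) = u ord0 (ver h) - \sum_(j < n) u ord0 (hor j) * Evert_mx w j h.
Proof.
rewrite /fco invmx_Fm mxE sum_hor_ver addrC.
under eq_bigr do rewrite block_mxEdr mxE.
under [s in _ + s]eq_bigr do rewrite block_mxEur mxE mulrN.
by rewrite sum_delta_l sumrN.
Qed.

Lemma Hproj_hor w u k : Hproj Gam w u ord0 (hor k) = u ord0 (hor k).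
Proof.
rewrite /Hproj summxE.
by under eq_bigr do rewrite mxE fco_hor Eframe_hor_hor; rewrite sum_delta_l.
Qed.

Lemma Hproj_ver w u h :
  Hproj Gam w u ord0 (ver h) = \sum_(j < n) u ord0 (hor j) * Evert_mx w j h.
Proof. by rewrite /Hproj summxE; under eq_bigr do rewrite mxE fco_hor Eframe_hor_ver. Qed.

Lemma Vproj_hor w u k : Vproj Gam w u ord0 (hor k) = 0.
Proof.
by rewrite /Vproj summxE big1 // => j _; rewrite mxE Eframe_ver_hor mulr0.
Qed.

Lemma Vproj_ver w u h : Vproj Gam w u ord0 (ver h) = fco Gam w u ord0 (ver h).
Proof.
rewrite /Vproj summxE.
by under eq_bigr do rewrite mxE Eframe_ver_ver; rewrite sum_delta_l.
Qed.

Lemma gmat_hor_hor w i j :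
  gmat Gam c w (hor i) (hor j) = c i j (xpart w) - Evert_mx w i j - Evert_mx w j i.
Proof. by rewrite gmat_block block_mxEul !mxE. Qed.

Lemma pd_gmat_verl z A i B : pd A (fun w => gmat Gam c w (ver i) B) z = 0.
Proof.
have -> : (fun w => gmat Gam c w (ver i) B) = cst (gmat Gam c z (ver i) B).
  apply/funext => w; rewrite /= !gmat_block; move: B.
  by apply: hor_ver_ind => j; rewrite ?block_mxEdl ?block_mxEdr.
exact: derive_cst.
Qed.

Lemma pd_gmat_verr z A B j : pd A (fun w => gmat Gam c w B (ver j)) z = 0.
Proof.
have -> : (fun w => gmat Gam c w B (ver j)) = cst (gmat Gam c z B (ver j)).
  apply/funext => w; rewrite /= !gmat_block; move: B.
  by apply: hor_ver_ind => i; rewrite ?block_mxEur ?block_mxEdr.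
exact: derive_cst.
Qed.

Lemma shift_cvecE z A B (h : R) : (h *: cvec R A + z) ord0 B = h * (A == B)%:R + z ord0 B.
Proof. by rewrite mxE [in LHS]mxE cvecE. Qed.

Lemma xpart_shift_ver z k (h : R) : xpart (h *: cvec R (ver k) + z) = xpart z.
Proof. by apply/rowP => a; rewrite [LHS]mxE shift_cvecE eq_rlshift mulr0 add0r mxE. Qed.

Lemma Evert_mx_shift_ver z k (h : R) j l :
  Evert_mx (h *: cvec R (ver k) + z) j l = Evert_mx z j l + h * Gam k l j (xpart z).
Proof.
rewrite !mxE xpart_shift_ver.
under eq_bigr do rewrite mxE shift_cvecE eq_rshift mulrDl.
rewrite big_split /= addrC; congr (_ + _).
  by apply: eq_bigr => a _; rewrite mxE.
rewrite (bigD1 k) //= eqxx mulr1 big1 ?addr0 // => a.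
by rewrite eq_sym => /negbTE ->; rewrite mulr0 mul0r.
Qed.

Lemma pd_ver_gmat_hor_hor z k i j :
  pd (ver k) (fun w => gmat Gam c w (hor i) (hor j)) z =
  - (Gam k j i (xpart z) + Gam k i j (xpart z)).
Proof.
apply: (proj2 (derive_along_affine _)) => h.
rewrite !gmat_hor_hor !Evert_mx_shift_ver xpart_shift_ver -[h *: _]/(h * _).
ring.
Qed.

Lemma LCGam_hor z k A B :
  LCGam Gam c z (hor k) A B = - (2^-1 * pd (ver k) (fun w => gmat Gam c w A B) z).
Proof.
rewrite /LCGam sum_hor_ver [s in s + _]big1 ?add0r; last first.
  by move=> d _; rewrite invmx_gmat block_mxEul mxE mul0r.
under eq_bigr do rewrite invmx_gmat block_mxEur mxE !pd_gmat_verr add0r sub0r.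
by rewrite sum_delta_r mulrN.
Qed.

Lemma LCGam_ver_ver z h A j :
  LCGam Gam c z (ver h) A (ver j) = 2^-1 * pd (ver j) (fun w => gmat Gam c w A (hor h)) z.
Proof.
rewrite /LCGam sum_hor_ver [s in _ + s]big1 ?addr0; last first.
  by move=> d _; rewrite !pd_gmat_verl !pd_gmat_verr addr0 subr0 mulr0.
under eq_bigr do rewrite invmx_gmat block_mxEdl mxE pd_gmat_verl pd_gmat_verr add0r subr0.
by rewrite sum_delta_r.
Qed.

Lemma LCGam_hor_hor_hor z k i j :
  Gam k i j (xpart z) = Gam k j i (xpart z) ->
  LCGam Gam c z (hor k) (hor i) (hor j) = Gam k i j (xpart z).
Proof.
move=> Gsym; have two_neq0 : (2 : R) != 0 by rewrite pnatr_eq0.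
by rewrite LCGam_hor pd_ver_gmat_hor_hor Gsym; field.
Qed.

Lemma LCGam_hor_verl z k i B : LCGam Gam c z (hor k) (ver i) B = 0.
Proof. by rewrite LCGam_hor pd_gmat_verl mulr0 oppr0. Qed.

Lemma LCGam_hor_verr z k A j : LCGam Gam c z (hor k) A (ver j) = 0.
Proof. by rewrite LCGam_hor pd_gmat_verr mulr0 oppr0. Qed.

Lemma LCGam_ver_hor_ver z h i j :
  Gam j h i (xpart z) = Gam j i h (xpart z) ->
  LCGam Gam c z (ver h) (hor i) (ver j) = - Gam j i h (xpart z).
Proof.
move=> Gsym; have two_neq0 : (2 : R) != 0 by rewrite pnatr_eq0.
by rewrite LCGam_ver_ver pd_ver_gmat_hor_hor Gsym; field.
Qed.

Lemma LCGam_ver_ver_ver z h i j : LCGam Gam c z (ver h) (ver i) (ver j) = 0.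
Proof. by rewrite LCGam_ver_ver pd_gmat_verl mulr0. Qed.

Lemma HLframe_ver z i B : HLframe Gam (ver i) B z = 0.
Proof. by rewrite /HLframe split_ver. Qed.

Lemma HLframe_hor_hor_hor z i j k :
  HLframe Gam (hor i) (hor j) z ord0 (hor k) = Gam k i j (xpart z).
Proof.
rewrite /HLframe !split_hor summxE.
by under eq_bigr do rewrite mxE Eframe_hor_hor; rewrite sum_delta_l.
Qed.

Lemma HLframe_hor_hor_ver z i j h :
  HLframe Gam (hor i) (hor j) z ord0 (ver h) =
  \sum_(l < n) Gam l i j (xpart z) * Evert_mx z l h.
Proof.
by rewrite /HLframe !split_hor summxE; under eq_bigr do rewrite mxE Eframe_hor_ver.
Qed.

Lemma HLframe_hor_ver_hor z i j k : HLframe Gam (hor i) (ver j) z ord0 (hor k) = 0.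
Proof.
rewrite /HLframe split_hor split_ver mxE summxE big1 ?oppr0 // => l _.
by rewrite mxE Eframe_ver_hor mulr0.
Qed.

Lemma HLframe_hor_ver_ver z i j h :
  HLframe Gam (hor i) (ver j) z ord0 (ver h) = - Gam j i h (xpart z).
Proof.
rewrite /HLframe split_hor split_ver mxE summxE.
by under eq_bigr do rewrite mxE Eframe_ver_ver; rewrite sum_delta_l.
Qed.

Section Derivability.
Variables (z v : pt R n).
Hypothesis Gam_diff : forall a h j, differentiable (Gam a h j) (xpart z).

Lemma derivable_Evert_mx j h : derivable (fun w => Evert_mx w j h) z v.
Proof.
have -> : (fun w => Evert_mx w j h) =
    \sum_(a < n) (fun w => w ord0 (ver a) * Gam a h j (xpart w)).
  by apply/funext => w; rewrite fct_sumE mxE; apply: eq_bigr => a _; rewrite mxE.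
apply: derivable_sum => a; apply: derivableM; first exact: derivable_coord.
exact: derivable_comp_xpart.
Qed.

Variable Y : vfield R n.
Hypothesis Y_der : forall B, derivable (fun w => Y w ord0 B) z v.

Lemma derivable_Hproj : derivable (fun w => Hproj Gam w (Y w)) z v.
Proof.
apply/derivable_mxP => i C; rewrite (ord1 i); move: C; apply: hor_ver_ind => k.
  have -> : (fun w => Hproj Gam w (Y w) ord0 (hor k)) = (fun w => Y w ord0 (hor k)).
    by apply/funext => w; rewrite Hproj_hor.
  exact: Y_der.
have -> : (fun w => Hproj Gam w (Y w) ord0 (ver k)) =
    \sum_(j < n) (fun w => Y w ord0 (hor j) * Evert_mx w j k).
  by apply/funext => w; rewrite Hproj_ver fct_sumE.
by apply: derivable_sum => j; apply: derivableM; [exact: Y_der | exact: derivable_Evert_mx].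
Qed.

Lemma derivable_Vproj : derivable (fun w => Vproj Gam w (Y w)) z v.
Proof.
apply/derivable_mxP => i C; rewrite (ord1 i); move: C; apply: hor_ver_ind => k.
  have -> : (fun w => Vproj Gam w (Y w) ord0 (hor k)) = cst 0.
    by apply/funext => w; rewrite Vproj_hor.
  exact: derivable_cst.
have -> : (fun w => Vproj Gam w (Y w) ord0 (ver k)) =
    (fun w => Y w ord0 (ver k)) - \sum_(j < n) (fun w => Y w ord0 (hor j) * Evert_mx w j k).
  by apply/funext => w; rewrite Vproj_ver fco_ver fct_sumE.
apply: derivableB; first exact: Y_der.
by apply: derivable_sum => j; apply: derivableM; [exact: Y_der | exact: derivable_Evert_mx].
Qed.

End Derivability.

Section AtPoint.
Variables (X Y : vfield R n) (z : pt R n).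
Hypothesis Gam_diff : forall a h j, differentiable (Gam a h j) (xpart z).
Hypothesis Y_der : forall B, derivable (fun w => Y w ord0 B) z (X z).
Hypothesis Gam_sym : forall h i j, Gam h i j (xpart z) = Gam h j i (xpart z).

Lemma LC_entry (F : vfield R n) C : derivable F z (X z) ->
  LC Gam c X F z ord0 C = 'D_(X z) (fun w => F w ord0 C) z +
    \sum_(A < n + n) \sum_(B < n + n) LCGam Gam c z C A B * X z ord0 A * F z ord0 B.
Proof. by move=> Fder; rewrite /LC [LHS]mxE derive_mx // !mxE. Qed.

Lemma LC_Hproj_hor k :
  LC Gam c X (fun w => Hproj Gam w (Y w)) z ord0 (hor k) =
  'D_(X z) (fun w => Y w ord0 (hor k)) z +
  \sum_(i < n) \sum_(j < n) Gam k i j (xpart z) * X z ord0 (hor i) * Y z ord0 (hor j).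
Proof.
rewrite LC_entry; last exact: derivable_Hproj.
have -> : (fun w => Hproj Gam w (Y w) ord0 (hor k)) = (fun w => Y w ord0 (hor k)).
  by apply/funext => w; rewrite Hproj_hor.
rewrite sum_hor_ver [s in _ + (_ + s)]big1 ?addr0; last first.
  by move=> i _; apply: big1 => B _; rewrite LCGam_hor_verl !mul0r.
congr (_ + _); apply: eq_bigr => i _.
rewrite sum_hor_ver [s in _ + s]big1 ?addr0; last by move=> j _; rewrite LCGam_hor_verr !mul0r.
by apply: eq_bigr => j _; rewrite LCGam_hor_hor_hor // Hproj_hor.
Qed.

Lemma LC_Vproj_hor k : LC Gam c X (fun w => Vproj Gam w (Y w)) z ord0 (hor k) = 0.
Proof.
rewrite LC_entry; last exact: derivable_Vproj.
have -> : (fun w => Vproj Gam w (Y w) ord0 (hor k)) = cst 0.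
  by apply/funext => w; rewrite Vproj_hor.
rewrite derive_cst add0r; apply: big1 => A _.
rewrite sum_hor_ver big1 ?add0r => [|j _]; last by rewrite Vproj_hor mulr0.
by apply: big1 => j _; rewrite LCGam_hor_verr !mul0r.
Qed.

Lemma LC_Vproj_ver h :
  LC Gam c X (fun w => Vproj Gam w (Y w)) z ord0 (ver h) =
  'D_(X z) (fun w => fco Gam w (Y w) ord0 (ver h)) z +
  \sum_(i < n) \sum_(j < n)
    - Gam j i h (xpart z) * X z ord0 (hor i) * fco Gam z (Y z) ord0 (ver j).
Proof.
rewrite LC_entry; last exact: derivable_Vproj.
have -> : (fun w => Vproj Gam w (Y w) ord0 (ver h)) = (fun w => fco Gam w (Y w) ord0 (ver h)).
  by apply/funext => w; rewrite Vproj_ver.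
have Vhor0 A j :
    LCGam Gam c z (ver h) A (hor j) * X z ord0 A * Vproj Gam z (Y z) ord0 (hor j) = 0.
  by rewrite Vproj_hor mulr0.
congr (_ + _); rewrite sum_hor_ver [s in _ + s]big1 ?addr0; last first.
  move=> i _; rewrite sum_hor_ver big1 ?add0r => [|j _]; last exact: Vhor0.
  by apply: big1 => j _; rewrite LCGam_ver_ver_ver !mul0r.
apply: eq_bigr => i _; rewrite sum_hor_ver big1 ?add0r => [|j _]; last exact: Vhor0.
by apply: eq_bigr => j _; rewrite LCGam_ver_hor_ver // Vproj_ver.
Qed.

Lemma SVK_hor k :
  SVK Gam c X Y z ord0 (hor k) =
  'D_(X z) (fun w => Y w ord0 (hor k)) z +
  \sum_(i < n) \sum_(j < n) Gam k i j (xpart z) * X z ord0 (hor i) * Y z ord0 (hor j).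
Proof. by rewrite /SVK [LHS]mxE Hproj_hor Vproj_hor addr0 LC_Hproj_hor. Qed.

Lemma SVK_ver h :
  SVK Gam c X Y z ord0 (ver h) =
  \sum_(j < n) ('D_(X z) (fun w => Y w ord0 (hor j)) z +
      \sum_(i < n) \sum_(l < n) Gam j i l (xpart z) * X z ord0 (hor i) * Y z ord0 (hor l)) *
    Evert_mx z j h +
  ('D_(X z) (fun w => fco Gam w (Y w) ord0 (ver h)) z +
  \sum_(i < n) \sum_(j < n)
    - Gam j i h (xpart z) * X z ord0 (hor i) * fco Gam z (Y z) ord0 (ver j)).
Proof.
rewrite /SVK [LHS]mxE Hproj_ver Vproj_ver fco_ver LC_Vproj_ver.
under eq_bigr do rewrite LC_Hproj_hor.
by under [s in _ + (_ - s)]eq_bigr do rewrite LC_Vproj_hor mul0r; rewrite big1_eq subr0.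
Qed.

Lemma fco_hor_fun j :
  (fun w => fco Gam w (Y w) ord0 (hor j)) = (fun w => Y w ord0 (hor j)).
Proof. by apply/funext => w; rewrite fco_hor. Qed.

Lemma HL_hor k : HL Gam X Y z ord0 (hor k) = SVK Gam c X Y z ord0 (hor k).
Proof.
rewrite SVK_hor /HL [LHS]mxE !summxE !sum_hor_ver.
under eq_bigr do rewrite mxE Eframe_hor_hor.
rewrite sum_delta_l fco_hor_fun [s in _ + s + _]big1 ?addr0; last first.
  by move=> j _; rewrite mxE Eframe_ver_hor mulr0.
rewrite [s in _ + (_ + s)]big1 ?addr0; last first.
  by move=> i _; rewrite summxE big1 // => B _; rewrite HLframe_ver scaler0 mxE.
congr (_ + _); apply: eq_bigr => i _; rewrite summxE sum_hor_ver.
rewrite [s in _ + s]big1 ?addr0; last by move=> j _; rewrite mxE HLframe_hor_ver_hor mulr0.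
by apply: eq_bigr => j _; rewrite mxE HLframe_hor_hor_hor !fco_hor mulrC mulrA.
Qed.

Lemma HL_ver h : HL Gam X Y z ord0 (ver h) = SVK Gam c X Y z ord0 (ver h).
Proof.
rewrite SVK_ver /HL [LHS]mxE !summxE !sum_hor_ver.
under eq_bigr do rewrite mxE Eframe_hor_ver fco_hor_fun.
under [s in _ + s + _]eq_bigr do rewrite mxE Eframe_ver_ver.
rewrite sum_delta_l [s in _ + (_ + s)]big1 ?addr0; last first.
  by move=> i _; rewrite summxE big1 // => B _; rewrite HLframe_ver scaler0 mxE.
have HLframe_sum i :
    (\sum_(B < n + n) (fco Gam z (X z) ord0 (hor i) * fco Gam z (Y z) ord0 B) *:
       HLframe Gam (hor i) B z) ord0 (ver h) =
    \sum_(l < n) X z ord0 (hor i) * Y z ord0 (hor l) *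
      \sum_(j < n) Gam j i l (xpart z) * Evert_mx z j h +
    \sum_(j < n) - Gam j i h (xpart z) * X z ord0 (hor i) * fco Gam z (Y z) ord0 (ver j).
  rewrite summxE sum_hor_ver; congr (_ + _); apply: eq_bigr => j _.
    by rewrite mxE HLframe_hor_hor_ver !fco_hor.
  by rewrite mxE HLframe_hor_ver_ver fco_hor mulrC mulrA.
under [s in _ + s = _]eq_bigr do rewrite HLframe_sum.
under [in RHS]eq_bigr do rewrite mulrDl.
rewrite big_split [in RHS]big_split /= sum_trilinear_swap.
by rewrite -!addrA; congr (_ + _); rewrite addrCA.
Qed.

End AtPoint.

End AdaptedFrame.

Theorem proposition5 (R : realType) (n : nat)
  (U : set 'rV[R]_n) (U_open : open U)
  (Gam : 'I_n -> 'I_n -> 'I_n -> 'rV[R]_n -> R)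
  (c : 'I_n -> 'I_n -> 'rV[R]_n -> R)
  (Gam_smooth : forall h i j, smooth_on U (Gam h i j))
  (torsion_free : forall h i j x, U x -> Gam h i j x = Gam h j i x)
  (c_smooth : forall i j, smooth_on U (c i j))
  (c_sym : forall i j x, U x -> c i j x = c j i x)
  (X Y : vfield R n)
  (X_smooth : forall A, smooth_on (@xpart R n @^-1` U) (fun z => X z ord0 A))
  (Y_smooth : forall A, smooth_on (@xpart R n @^-1` U) (fun z => Y z ord0 A))
  (z : pt R n) (hz : U (xpart z)) :
  SVK Gam c X Y z = HL Gam X Y z.
Proof.
have Gam_diff a h j : differentiable (Gam a h j) (xpart z) := Gam_smooth a h j [::] _ hz.
have Y_der B : derivable (fun w => Y w ord0 B) z (X z).
  exact/diff_derivable/(Y_smooth B [::] z hz).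
have Gam_sym h i j := torsion_free h i j _ hz.
by apply/rowP; apply: hor_ver_ind => k; apply/esym; [exact: HL_hor | exact: HL_ver].
Qed.
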